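(* There exist a graph $H$ and a positive semidefinite $0$-regular kernel $W$ such that $t(H,W)<0$.
   Context: Let $(\Omega,\mu)$ be an atomless standard probability space. A kernel is a bounded symmetric measurable $W:\Omega\times\Omega\to\mathbb R$. For a graph $H$, $t(H,W)=\int_{\Omega^{V(H)}}\prod_{uv\in E(H)}W(x_u,x_v)\prod_{v\in V(H)}d\mu(x_v)$. A kernel is $0$-regular if $\int_\Omega W(x,y)\,dy=0$ for a.e. $x$, and positive semidefinite if $\iint f(x)W(x,y)f(y)\,dx\,dy\ge0$ for every bounded measurable $f:\Omega\to\mathbb R$. *)

From HB Require Import structures.
From mathcomp Require Import all_boot all_order all_algebra.
From mathcomp Require Import all_classical all_reals all_analysis.
Set Implicit Arguments. Unset Strict Implicit. Unset Printing Implicit Defensive.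
Import Order.TTheory GRing.Theory Num.Theory.
Local Open Scope classical_set_scope.
Local Open Scope ring_scope.

Section Graphons.
Variable R : realType.

Definition Omega : set R := `[0%R, 1%R].

Definition leb := (@lebesgue_measure R).

Definition intO (f : R -> R) : R := Rintegral leb Omega f.

Definition is_kernel (W : R -> R -> R) : Prop :=
  [/\ measurable_fun (Omega `*` Omega) (fun p : R * R => W p.1 p.2),
      (exists M : R, forall x y, Omega x -> Omega y -> `|W x y| <= M) &
      (forall x y, Omega x -> Omega y -> W x y = W y x)].

Definition zero_regular (W : R -> R -> R) : Prop :=
  {ae leb, forall x, Omega x -> intO (fun y => W x y) = 0}.

Definition psd_kernel (W : R -> R -> R) : Prop :=
  forall f : R -> R, measurable_fun Omega f ->
    (exists M : R, forall x, Omega x -> `|f x| <= M) ->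
    0 <= intO (fun x => intO (fun y => f x * W x y * f y)).

(* Iterated integral over Omega^k of F : (nat -> R) -> R, integrating
   coordinates 0, ..., k-1 (coordinate k-1 innermost). *)
Fixpoint iter_intO (k : nat) (F : (nat -> R) -> R) : R :=
  match k with
  | 0 => F (fun _ => 0)
  | k'.+1 => iter_intO k' (fun x =>
        intO (fun y => F (fun i => if i == k' then y else x i)))
  end.

Definition simple_graph (n : nat) (E : rel 'I_n) : Prop :=
  (forall i, ~~ E i i) /\ (forall i j, E i j = E j i).

Definition hom_density (n : nat) (E : rel 'I_n) (W : R -> R -> R) : R :=
  iter_intO n (fun x =>
    \prod_(i < n) \prod_(j < n | (i < j)%N && E i j) W (x i) (x j)).

End Graphons.

(* A rank-one kernel W(x,y) = phi(x) phi(y) is positive semidefinite, its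
   quadratic form being (int f phi)^2, and it is 0-regular as soon as
   int phi = 0.  Its homomorphism densities factor over the vertices:
   t(H,W) = prod_v m_(deg v), where m_k = int phi^k.  For phi equal to 6, -5, 2
   on [0,1/5), [1/5,3/5), [3/5,1] one gets m_k = (6^k + 2(-5)^k + 2*2^k)/5,
   so m_1 = 0, m_2 > 0, m_3 = -18/5 < 0 < 318 = m_5, and a graph H with degree
   sequence (5,3,2,2,2,2) has t(H,W) = m_5 m_3 m_2^4 < 0. *)

From mathcomp Require Import all_boot all_order all_algebra.
From mathcomp Require Import all_classical all_reals all_analysis.
From mathcomp Require Import measurable_realfun.
From mathcomp Require Import ring lra.
Set Implicit Arguments. Unset Strict Implicit. Unset Printing Implicit Defensive.
Import Order.TTheory GRing.Theory Num.Theory.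
Local Open Scope classical_set_scope.
Local Open Scope ring_scope.

Section IntegralOmega.
Variable R : realType.
Local Notation Omega := (@Omega R).
Local Notation leb := (@leb R).

Lemma measurable_Omega : measurable Omega.
Proof. exact: measurable_itv. Qed.

Lemma leb_Omega : (leb : measure _ R) Omega = 1%E.
Proof. by have := @lebesgue_measure_itv R `[0, 1]; rewrite /= lte01 EFinN sube0. Qed.

Lemma integrable_Omega (f : R -> R) (M : R) : measurable_fun Omega f ->
  (forall x, Omega x -> `|f x| <= M) -> leb.-integrable Omega (EFin \o f).
Proof.
move=> mf f_le_M; apply: measurable_bounded_integrable => //.
- exact: measurable_Omega.
- by rewrite [X in (X < _)%E]leb_Omega ltry.
- exists M; split; first exact: num_real.
  by move=> M' /ltW M_le_M' x Ox; exact: le_trans (f_le_M x Ox) M_le_M'.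
Qed.

Lemma integrableT_Omega (f : R -> R) (M : R) : measurable_fun setT f ->
  (forall x, `|f x| <= M) -> leb.-integrable Omega (EFin \o f).
Proof.
move=> mf f_le_M; apply: (@integrable_Omega _ M) => //.
exact: measurable_funS mf.
Qed.

Lemma integrable_Omega_cst (r : R) : leb.-integrable Omega (EFin \o fun=> r).
Proof.
apply: (@integrableT_Omega _ `|r|) => //; exact: measurable_cst.
Qed.

Lemma integrable_OmegaD (f g : R -> R) : leb.-integrable Omega (EFin \o f) ->
  leb.-integrable Omega (EFin \o g) -> leb.-integrable Omega (EFin \o (fun y => f y + g y)).
Proof.
move=> If Ig; have : leb.-integrable Omega ((EFin \o f) \+ (EFin \o g))%E.
  by apply: integrableD => //; exact: measurable_Omega.
by congr (_.-integrable _ _); apply: funext => y.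
Qed.

Lemma integrable_OmegaZl (f : R -> R) (r : R) : leb.-integrable Omega (EFin \o f) ->
  leb.-integrable Omega (EFin \o (fun y => r * f y)).
Proof.
move=> If; have : leb.-integrable Omega (fun y => r%:E * (EFin \o f) y)%E.
  by apply: integrableZl => //; exact: measurable_Omega.
by congr (_.-integrable _ _); apply: funext => y.
Qed.

Lemma intO_cst (r : R) : intO (fun _ => r) = r.
Proof.
rewrite /intO Rintegral_cst; last exact: measurable_Omega.
by rewrite leb_Omega mulr1.
Qed.

Lemma intOZl (f : R -> R) (r : R) : leb.-integrable Omega (EFin \o f) ->
  intO (fun y => r * f y) = r * intO f.
Proof. by move=> If; rewrite /intO RintegralZl //; exact: measurable_Omega. Qed.

Lemma intOZr (f : R -> R) (r : R) : leb.-integrable Omega (EFin \o f) ->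
  intO (fun y => f y * r) = intO f * r.
Proof. by move=> If; rewrite /intO RintegralZr //; exact: measurable_Omega. Qed.

Lemma intOD (f g : R -> R) : leb.-integrable Omega (EFin \o f) ->
  leb.-integrable Omega (EFin \o g) -> intO (fun y => f y + g y) = intO f + intO g.
Proof. by move=> If Ig; rewrite /intO RintegralD //; exact: measurable_Omega. Qed.

Lemma intO_indic_lt (t : R) : 0 <= t <= 1 -> intO \1_(`]-oo, t[) = t.
Proof.
move=> /andP[t_ge0 t_le1].
rewrite /intO /Rintegral integral_indic; [|exact: measurable_Omega|exact: measurable_itv].
have -> : `]-oo, t[ `&` Omega = [set` `[0, t[].
  apply/seteqP; split=> x /=; rewrite /Omega /= !in_itv /=.
    by move=> [-> /andP[-> _]].
  by move=> /andP[-> x_lt_t]; split=> //; exact: le_trans (ltW x_lt_t) t_le1.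
have := @lebesgue_measure_itv R `[0, t[; rewrite /= lte_fin EFinN sube0.
by case: ltgtP t_ge0 => // [_ _|<- _] mu_eq; exact: (congr1 fine mu_eq).
Qed.

Lemma iter_intO_prod (g : nat -> R -> R) :
  (forall i, leb.-integrable Omega (EFin \o g i)) ->
  forall k c, iter_intO k (fun x => c * \prod_(i < k) g i (x i)) =
              c * \prod_(i < k) intO (g i).
Proof.
move=> Ig; elim=> [|k IHk] c /=; first by rewrite !big_ord0.
rewrite big_ord_recr /= mulrA mulrAC -IHk; congr iter_intO; apply: funext => x.
rewrite mulrAC -intOZl //; congr intO; apply: funext => y.
rewrite big_ord_recr /= eqxx mulrA; congr (_ * _ * _).
by apply: eq_bigr => i _; rewrite ltn_eqF.
Qed.

End IntegralOmega.

Section VertexDegree.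
Variables (n : nat) (E : rel 'I_n).

Definition vdeg (i : 'I_n) : nat := #|E i|.

Lemma vdegE i : vdeg i = (\sum_(j < n) E i j)%N.
Proof.
rewrite /vdeg -sum1_card big_mkcond /=; apply: eq_bigr => j _.
by rewrite unfold_in; case: (E i j).
Qed.

Lemma vdeg_split i : ~~ E i i ->
  vdeg i = (#|[pred j : 'I_n | (i < j)%N && E i j]| +
            #|[pred j : 'I_n | (j < i)%N && E i j]|)%N.
Proof.
move=> Eii; rewrite /vdeg -(cardID (fun j : 'I_n => (i < j)%N) (E i)).
congr (_ + _)%N; apply: eq_card => j; rewrite !inE; first by rewrite andbC.
rewrite unfold_in -leqNgt andbC.
have [->|neq_ji] := eqVneq j i; first by rewrite ltnn (negbTE Eii) andbF.
by rewrite leq_eqVlt -[(j == i :> nat)]/(j == i) (negbTE neq_ji) andbC.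
Qed.

Lemma prod_edges_vdeg (R : comNzRingType) (a : 'I_n -> R) : simple_graph E ->
  \prod_(i < n) \prod_(j < n | (i < j)%N && E i j) (a i * a j) =
  \prod_(i < n) a i ^+ vdeg i.
Proof.
move=> [Eirr Esym].
under eq_bigr => i _.
  rewrite big_split /= (prodr_const [pred j : 'I_n | (i < j)%N && E i j]).
  over.
rewrite big_split /=.
under [X in _ * X = _]eq_bigr do rewrite big_mkcond /=.
rewrite exchange_big /=.
under [X in _ * X = _]eq_bigr => j _.
  rewrite -big_mkcond /= (prodr_const [pred i : 'I_n | (i < j)%N && E i j]).
  over.
rewrite -big_split /=; apply: eq_bigr => i _.
rewrite -exprD vdeg_split //; congr (_ ^+ (_ + _)).
by apply: eq_card => j; rewrite !inE Esym.
Qed.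

End VertexDegree.

Definition rank_one (R : realType) (phi : R -> R) : R -> R -> R :=
  fun x y => phi x * phi y.

Section RankOneKernel.
Variables (R : realType) (phi : R -> R) (M : R).
Hypothesis measurable_phi : measurable_fun setT phi.
Hypothesis phi_le : forall x, `|phi x| <= M.
Local Notation Omega := (@Omega R).
Local Notation leb := (@leb R).

Lemma integrable_phiX k : leb.-integrable Omega (EFin \o (fun y => phi y ^+ k)).
Proof.
have M_ge0 : 0 <= M by exact: le_trans (normr_ge0 _) (phi_le 0).
apply: (@integrableT_Omega _ _ (M ^+ k)); first exact: measurable_funX.
by move=> y; rewrite normrX lerXn2r ?nnegrE.
Qed.

Lemma rank_one_kernel : is_kernel (rank_one phi).
Proof.
split.
- apply: measurable_funM; apply: measurableT_comp => //.
  + exact: measurable_funS measurableT (subsetT _) measurable_fst.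
  + exact: measurable_funS measurableT (subsetT _) measurable_snd.
- by exists (M * M) => x y _ _; rewrite normrM ler_pM ?normr_ge0.
- by move=> x y _ _; rewrite /rank_one mulrC.
Qed.

Lemma rank_one_psd : psd_kernel (rank_one phi).
Proof.
move=> f mf [Mf f_le_Mf].
have mfphi : measurable_fun Omega (fun y => f y * phi y).
  by apply: measurable_funM => //; exact: measurable_funS measurable_phi.
have Ifphi : leb.-integrable Omega (EFin \o (fun y => f y * phi y)).
  apply: (integrable_Omega (M := Mf * M)) mfphi _ => y Oy.
  by rewrite normrM ler_pM ?normr_ge0 ?f_le_Mf.
have -> : (fun x => intO (fun y => f x * rank_one phi x y * f y)) =
    (fun x => f x * phi x * intO (fun y => f y * phi y)).
  apply: funext => x; rewrite -intOZl //; congr intO; apply: funext => y.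
  by rewrite /rank_one; ring.
by rewrite intOZr // -expr2 sqr_ge0.
Qed.

Lemma rank_one_zero_regular : intO phi = 0 -> zero_regular (rank_one phi).
Proof.
move=> phi_mean0; apply: aeW => x _.
by rewrite /rank_one intOZl ?phi_mean0 ?mulr0 //; exact: (integrable_phiX 1).
Qed.

Lemma hom_density_rank_one n (E : rel 'I_n) : simple_graph E ->
  hom_density E (rank_one phi) = \prod_(i < n) intO (fun y => phi y ^+ vdeg E i).
Proof.
move=> simpleE.
(* [iter_intO] indexes coordinates by [nat]; vertex exponents are padded by 0. *)
pose g m y := phi y ^+ oapp (vdeg E) 0%N (insub m).
have gE (i : 'I_n) : g i = fun y => phi y ^+ vdeg E i by rewrite /g valK.
transitivity (iter_intO n (fun x => 1 * \prod_(i < n) g i (x i))).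
  congr iter_intO; apply: funext => x.
  rewrite mul1r prod_edges_vdeg //.
  by apply: eq_bigr => i _; rewrite gE.
rewrite iter_intO_prod => [|m]; last exact: integrable_phiX.
by rewrite mul1r; apply: eq_bigr => i _; rewrite gE.
Qed.

End RankOneKernel.

Section StepFunction.
Variable R : realType.
Implicit Types a b c s t y : R.

Definition step3 a b c s t y : R := if y < s then a else if y < t then b else c.

Lemma step3X a b c s t k y :
  step3 a b c s t y ^+ k = step3 (a ^+ k) (b ^+ k) (c ^+ k) s t y.
Proof. by rewrite /step3; case: ifP => //; case: ifP. Qed.

Lemma step3_bounded a b c s t y : `|step3 a b c s t y| <= `|a| + `|b| + `|c|.
Proof.
have := normr_ge0 a; have := normr_ge0 b; have := normr_ge0 c.
rewrite /step3; case: ifP => _; last case: ifP => _; lra.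
Qed.

Lemma step3_indic a b c s t : s <= t -> step3 a b c s t =
  (fun y => c + (b - c) * \1_(`]-oo, t[) y + (a - b) * \1_(`]-oo, s[) y).
Proof.
move=> s_le_t; apply: funext => y; rewrite /step3 !indicE !mem_setE !in_itv /=.
case: (ltP y s) => [y_lt_s|s_le_y]; first by rewrite (lt_le_trans y_lt_s s_le_t) /=; ring.
by case: ltP => _ /=; ring.
Qed.

Lemma measurable_step3 a b c s t : s <= t -> measurable_fun setT (step3 a b c s t).
Proof.
move=> s_le_t; rewrite step3_indic //.
apply: measurable_funD; first apply: measurable_funD; first exact: measurable_cst.
- by apply: measurable_funM => //; apply: measurable_indic; exact: measurable_itv.
- by apply: measurable_funM => //; apply: measurable_indic; exact: measurable_itv.
Qed.

Lemma intO_step3 a b c s t : 0 <= s -> s <= t -> t <= 1 ->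
  intO (step3 a b c s t) = a * s + b * (t - s) + c * (1 - t).
Proof.
move=> s_ge0 s_le_t t_le1.
have indic_le1 r y : `|\1_(`]-oo, r[) y| <= 1 :> R.
  by rewrite indicE; case: (_ \in _); rewrite ?normr0 ?normr1.
have Iindic r : (@leb R).-integrable (@Omega R) (EFin \o \1_(`]-oo, r[)).
  apply: integrableT_Omega (indic_le1 r).
  by apply: measurable_indic; exact: measurable_itv.
have s01 : 0 <= s <= 1 by rewrite s_ge0 (le_trans s_le_t t_le1).
have t01 : 0 <= t <= 1 by rewrite (le_trans s_ge0 s_le_t) t_le1.
rewrite step3_indic // !intOD ?intOZl ?intO_cst ?intO_indic_lt
  ?integrable_OmegaD ?integrable_OmegaZl ?integrable_Omega_cst //.
ring.
Qed.

End StepFunction.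

Definition H_edges : seq (nat * nat) :=
  [:: (0, 1); (0, 2); (1, 2); (0, 3); (1, 3); (0, 4); (0, 5); (4, 5)]%N.

Definition H : rel 'I_6 := fun i j =>
  ((i : nat, j : nat) \in H_edges) || ((j : nat, i : nat) \in H_edges).

Lemma H_simple : simple_graph H.
Proof.
split; last by move=> i j; rewrite /H orbC.
by case=> [[|[|[|[|[|[|m]]]]]] Hm].
Qed.

Definition phi_witness (R : realType) : R -> R := step3 6 (-5) 2 (5^-1) (3 / 5).

Lemma phi_witness_moment (R : realType) k :
  intO (fun y => @phi_witness R y ^+ k) = (6 ^+ k + 2 * (-5) ^+ k + 2 * 2 ^+ k) / 5.
Proof.
rewrite (_ : (fun y => _) = step3 (6 ^+ k) ((-5) ^+ k) (2 ^+ k) (5^-1) (3 / 5)).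
  rewrite intO_step3; [by field | lra | lra | lra].
by apply: funext => y; rewrite step3X.
Qed.

Theorem proposition5p2 (R : realType) :
  exists (n : nat) (E : rel 'I_n) (W : R -> R -> R),
    simple_graph E /\ is_kernel W /\ psd_kernel W /\ zero_regular W /\
    hom_density E W < 0.
Proof.
have s_le_t : (5^-1 : R) <= 3 / 5 by lra.
have measurable_phi := measurable_step3 6 (-5) 2 s_le_t.
have phi_le := step3_bounded 6 (-5) 2 (5^-1 : R) (3 / 5).
exists 6%N, H, (rank_one (@phi_witness R)).
split; first exact: H_simple.
split; first exact: rank_one_kernel measurable_phi phi_le.
split; first exact: rank_one_psd measurable_phi phi_le.
split.
  apply: rank_one_zero_regular measurable_phi phi_le _.
  by have := phi_witness_moment R 1; rewrite !expr1 => ->; lra.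
rewrite (hom_density_rank_one measurable_phi phi_le H_simple).
under eq_bigr do rewrite vdegE phi_witness_moment.
rewrite !big_ord_recr !big_ord0 /= !addnE /= !exprS !expr0.
lra.
Qed.
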